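(* Let $k, r, a, b, m, n$ be integers satisfying $$k\geq 1,\quad 0\leq a\leq m,\quad n\geq km-r,\quad \max\{0,ka-r\}\leq b\leq n.$$ Let $L_{k,r}(a,b;m,n)$ be the set of lattice paths from $(a,b)$ to $(m,n)$ with unit steps $(1,0)$ and $(0,1)$ that stay weakly above the line $y=kx-r$. Then $$|L_{k,r}(a,b;m,n)|=\sum_{i=0}^{\lfloor\frac{b+r-ka}{k+1}\rfloor}(-1)^i\,\frac{n+r+1-km}{n+r+1-k(a+i)}\binom{m+n+r-(k+1)(a+i)}{m-a-i}\binom{b+r-k(a+i)}{i}.$$
   Context: Lattice paths use unit steps $(1,0)$ and $(0,1)$. A path stays weakly above the line $y=qx-r$ if every lattice point $(x,y)$ on it satisfies $y\geq qx-r$. $\lfloor x\rfloor$ is the largest integer not exceeding $x$. Binomial coefficients $\binom{N}{j}$ with $N\ge 0$ are the usual ones and equal $0$ when $j<0$ or $j>N$. *)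

From HB Require Import structures.
From mathcomp Require Import all_boot all_order all_algebra.
Set Implicit Arguments. Unset Strict Implicit. Unset Printing Implicit Defensive.
Import Order.TTheory GRing.Theory Num.Theory.
Local Open Scope ring_scope.

(* A lattice path starting at (a,b) is encoded by its step sequence:
   [true] = east step (1,0), [false] = north step (0,1). *)

Definition path_point (a b : int) (s : seq bool) (j : nat) : int * int :=
  (a + (count id (take j s))%:Z, b + (count negb (take j s))%:Z).

Definition stays_above (q r a b : int) (s : seq bool) : bool :=
  [forall j : 'I_(size s).+1,
     q * (path_point a b s j).1 - r <= (path_point a b s j).2].

Definition L_card (q r a b m n : int) : nat :=
  #|[set t : ((`|m - a| + `|n - b|)%N).-tuple bool |
       (count id t == `|m - a|%N) && stays_above q r a b t]|.

Definition binz (N j : int) : nat :=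
  if (0 <= N) && (0 <= j) then 'C(`|N|, `|j|) else 0%N.

From mathcomp Require Import all_boot all_order all_algebra.
From mathcomp Require Import ring lra zify.
Import Order.TTheory GRing.Theory Num.Theory.
Set Implicit Arguments. Unset Strict Implicit. Unset Printing Implicit Defensive.
Local Open Scope ring_scope.

(* Follow the slack y + r - k x along a path: an east step lowers it by k, a north
   step raises it by 1, and the path stays above the line iff the slack is never
   negative.  Hence the number P(n, M, h) of admissible step sequences of length n
   with M east steps and initial slack h satisfies
   P(n + 1, M, h) = P(n, M - 1, h - k) + P(n, M, h + 1) for h >= 0, and P = 0 for h < 0.
   Writing c = b + r - k a and N = n + r - k m for the initial and final slacks, the
   right-hand side is sum_i (-1)^i B(N, m - a - i) 'C(c - k i, i) with the ballot
   numbers B(N, j) = (N + 1) / (N + 1 + k j) 'C(N + (k + 1) j, j).  Pascal-type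
   identities for B and for 'C(c - k i, i) show that this sum obeys the same
   recurrence and boundary values, so the two agree by induction on n. *)

Lemma natr_fact_neq0 n : (n`!)%:R != 0 :> rat.
Proof. by rewrite pnatr_eq0 -lt0n fact_gt0. Qed.

(* The ballot number B(N, j), in factorial form so that its recurrences are field
   identities. *)
Definition ballot (K N j : nat) : rat :=
  (N.+1)%:R * ((N + K.+1 * j)`!)%:R / ((j`!)%:R * ((N.+1 + K * j)`!)%:R).

Lemma ballot0 K N : ballot K N 0 = 1.
Proof.
rewrite /ballot !muln0 !addn0 fact0 factS natrM mul1r.
by field; rewrite natr_fact_neq0 (addrC 1) natr1 pnatr_eq0.
Qed.

Lemma ballot0S K j : ballot K 0 j.+1 = ballot K K j.
Proof.
rewrite /ballot (_ : (1 + K * j.+1 = K.+1 + K * j)%N); last by lia.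
rewrite (_ : (0 + K.+1 * j.+1 = (K + K.+1 * j).+1)%N); last by lia.
rewrite (factS (K + K.+1 * j)) (factS j).
have := natr_fact_neq0 (K + K.+1 * j); have := natr_fact_neq0 j.
have := natr_fact_neq0 (K.+1 + K * j).
set f1 := (K.+1 + K * j)`!; set f2 := j`!; set f3 := (K + K.+1 * j)`!.
move=> h1 h2 h3; clearbody f1 f2 f3.
rewrite !natrM (_ : (K + K.+1 * j).+1%:R = K.+1%:R * j.+1%:R :> rat); last first.
  by rewrite -natrM; congr _%:R; lia.
by field; rewrite ?h1 ?h2 ?h3 (addrC 1) natr1 pnatr_eq0.
Qed.

Lemma ballotSS K N j : ballot K N.+1 j.+1 = ballot K N j.+1 + ballot K (N.+1 + K) j.
Proof.
rewrite /ballot.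
set Z := (N + K.+1 * j.+1)%N; set E := (N.+1 + K * j.+1)%N.
rewrite (_ : (N.+1 + K.+1 * j.+1 = Z.+1)%N); last by rewrite /Z; lia.
rewrite (_ : (N.+2 + K * j.+1 = E.+1)%N); last by rewrite /E; lia.
rewrite (_ : (N.+1 + K + K.+1 * j = Z)%N); last by rewrite /Z; lia.
rewrite (_ : ((N.+1 + K).+1 + K * j = E.+1)%N); last by rewrite /E; lia.
have eZ : Z.+1%:R = E%:R + j.+1%:R :> rat by rewrite -natrD /Z /E; congr _%:R; lia.
have eE : E%:R = N.+1%:R + K%:R * j.+1%:R :> rat by rewrite -natrM -natrD.
have eE1 : E.+1%:R = N.+2%:R + K%:R * j.+1%:R :> rat.
  by rewrite -natrM -natrD /E; congr _%:R; lia.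
rewrite (factS Z) (factS E) (factS j).
have := natr_fact_neq0 Z; have := natr_fact_neq0 j; have := natr_fact_neq0 E.
set f1 := Z`!; set f2 := j`!; set f3 := E`! => h1 h2 h3; clearbody f1 f2 f3.
rewrite !natrM eZ eE1 eE -addSn natrD.
clearbody Z E; field; rewrite h1 h2 (addrC 1) natr1 pnatr_eq0 andbT /=.
by apply/lt0r_neq0; have := ler0n rat N; have := ler0n rat K; have := ler0n rat j; nra.
Qed.

Lemma ballot_binomial K N j :
  ballot K N j = N.+1%:R / (N.+1 + K * j)%:R * 'C(N + K.+1 * j, j)%:R.
Proof.
rewrite /ballot.
have := @bin_fact (N + K.+1 * j) j ltac:(lia).
rewrite (_ : (N + K.+1 * j - j = N + K * j)%N); last by lia.
rewrite (_ : (N.+1 + K * j = (N + K * j).+1)%N); last by lia.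
rewrite (factS (N + K * j)).
have := natr_fact_neq0 j; have := natr_fact_neq0 (N + K * j).
set f1 := (N + K.+1 * j)`!; set f2 := j`!; set f3 := (N + K * j)`!.
set B := 'C(_, _) => h1 h2 e; clearbody f1 f2 f3 B.
rewrite -e !natrM (_ : (N + K * j).+1%:R = N.+1%:R + K%:R * j%:R :> rat); last first.
  by rewrite -natrM -natrD; congr _%:R; lia.
field; rewrite h1 h2 !andbT.
by apply/lt0r_neq0; have := ler0n rat N; have := ler0n rat K; have := ler0n rat j; nra.
Qed.

Definition bin_shift (K c i : nat) : nat := if (K * i <= c)%N then 'C(c - K * i, i) else 0.

Lemma bin_shift0 K c : bin_shift K c 0 = 1%N.
Proof. by rewrite /bin_shift muln0 leq0n bin0. Qed.

Lemma bin_shiftSS K c i :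
  bin_shift K c.+1 i.+1 =
  (bin_shift K c i.+1 + (if (K <= c)%N then bin_shift K (c - K) i else 0))%N.
Proof.
rewrite /bin_shift; have [le_Kic | lt_cKi] := leqP (K * i.+1) c.
  have le_Kc : (K <= c)%N by move: le_Kic; rewrite mulnS; lia.
  have le_Ki_cK : (K * i <= c - K)%N by move: le_Kic; rewrite mulnS; lia.
  rewrite leqW // le_Kc le_Ki_cK subSn // binS.
  by rewrite (_ : (c - K - K * i = c - K * i.+1)%N) // mulnS; lia.
have lt_cK_Ki : (K <= c)%N -> (K * i <= c - K)%N = false.
  by move=> le_Kc; apply/negbTE; move: lt_cKi; rewrite mulnS; lia.
case: leqP => [le_Kic1 | _]; last by case: ifP => // /lt_cK_Ki ->.
have -> : (c.+1 - K * i.+1 = 0)%N by lia.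
by rewrite bin0n; case: ifP => // /lt_cK_Ki ->.
Qed.

Lemma bin_shift_eq0 K c i : (c %/ K.+1 < i)%N -> bin_shift K c i = 0%N.
Proof.
rewrite ltn_divLR // /bin_shift => lt_c_iK; case: ifP => // le_Kic.
by rewrite bin_small //; move: lt_c_iK le_Kic; rewrite mulnSr mulnC; lia.
Qed.

(* The right-hand side of the theorem for M = m - a east steps, initial slack c and
   final slack N. *)
Definition ballot_sum (K M c N : nat) : rat :=
  \sum_(i < M.+1) (-1) ^+ i * ballot K N (M - i) * (bin_shift K c i)%:R.

Lemma ballot_sum0 K c N : ballot_sum K 0 c N = 1.
Proof. by rewrite /ballot_sum big_ord1 ballot0 bin_shift0 !mul1r. Qed.

Lemma ballot_sumS_slack K M c N :
  ballot_sum K M.+1 c.+1 N + (if (K <= c)%N then ballot_sum K M (c - K) N else 0) =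
  ballot_sum K M.+1 c N.
Proof.
rewrite /ballot_sum big_ord_recl [in RHS]big_ord_recl !bin_shift0 !subn0 -addrA.
congr (_ + _).
under eq_bigr => i _ do rewrite /= /bump /= subSS bin_shiftSS natrD mulrDr.
under [in RHS]eq_bigr => i _ do rewrite /= /bump /= subSS.
rewrite big_split /= -addrA [X in _ + X = _](_ : _ = 0) ?addr0 //.
case: ifP => _; last by rewrite addr0; apply: big1 => i _; rewrite mulr0.
by rewrite -big_split /=; apply: big1 => i _; rewrite exprS; ring.
Qed.

Lemma ballot_sumS_end K M c N :
  ballot_sum K M.+1 c N.+1 = ballot_sum K M.+1 c N + ballot_sum K M c (N.+1 + K).
Proof.
rewrite /ballot_sum big_ord_recr [in X in X + _]big_ord_recr /= !subnn !ballot0.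
rewrite addrAC -big_split; congr (_ + _); apply: eq_bigr => i _ /=.
by rewrite subSn ?(leq_ord i) // ballotSS; ring.
Qed.

Lemma ballot_sumS_end0 K M c :
  ballot_sum K M.+1 c 0 = ballot_sum K M c K + (-1) ^+ M.+1 * (bin_shift K c M.+1)%:R.
Proof.
rewrite /ballot_sum big_ord_recr /= subnn ballot0 mulr1; congr (_ + _).
by apply: eq_bigr => i _; rewrite subSn ?(leq_ord i) // ballot0S.
Qed.

(* The boundary value for paths without north steps. *)
Lemma ballot_sum_diag K M N : ballot_sum K M (N + K * M) N = 1.
Proof.
elim: M N => [|M IHM] N; first exact: ballot_sum0.
elim: N => [|N IHN].
  rewrite add0n ballot_sumS_end0 mulnS IHM /bin_shift mulnS leqnn subnn bin0n.
  by rewrite mulr0 addr0.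
have ballot_sum_off : ballot_sum K M.+1 (N.+1 + K * M.+1) N = 0.
  have := ballot_sumS_slack K M (N + K * M.+1) N.
  have le_K_NKM : (K <= N + K * M.+1)%N by rewrite mulnS; lia.
  have -> : (N + K * M.+1 - K = N + K * M)%N by rewrite mulnS; lia.
  by rewrite le_K_NKM IHM IHN -addSn => /(canRL (addrK 1)); rewrite subrr.
by rewrite ballot_sumS_end ballot_sum_off add0r mulnS addnA IHM.
Qed.

Definition ntuples n (p : pred (seq bool)) : nat := #|[set t : n.-tuple bool | p t]|.

Lemma eq_ntuples n p q : p =1 q -> ntuples n p = ntuples n q.
Proof. by move=> eq_pq; apply: eq_card => t; rewrite !inE eq_pq. Qed.

Lemma ntuplesE n p : ntuples n p = (\sum_(t : n.-tuple bool) p t)%N.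
Proof.
rewrite /ntuples -sum1_card big_mkcond.
by apply: eq_bigr => t _; rewrite inE; case: (p t).
Qed.

Lemma ntuples0 p : ntuples 0 p = p [::].
Proof. by rewrite ntuplesE (big_pred1 [tuple]) // => t; apply/esym/eqP; apply: tuple0. Qed.

Lemma ntuplesS n p :
  ntuples n.+1 p = (ntuples n (fun s => p (true :: s)) + ntuples n (fun s => p (false :: s)))%N.
Proof.
rewrite !ntuplesE (reindex (fun x : bool * n.-tuple bool => [tuple of x.1 :: x.2])) /=.
  by rewrite -(pair_bigA _ (fun x (t : n.-tuple bool) => nat_of_bool (p (x :: t)))) big_bool.
exists (fun t : n.+1.-tuple bool => (thead t, [tuple of behead t])).
  by case=> x t _; congr (_, _); apply: val_inj.
by move=> t _; apply: val_inj; rewrite /= [t]tuple_eta.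
Qed.

Fixpoint slack_nonneg (q h : int) (s : seq bool) : bool :=
  (0 <= h) && (if s is x :: s' then slack_nonneg q (if x then h - q else h + 1) s' else true).

Lemma forall_ordS n (P : pred nat) :
  [forall j : 'I_n.+1, P j] = P 0%N && [forall j : 'I_n, P j.+1].
Proof.
apply/forallP/andP => [P_all | [P0 /forallP P_S] [[|j] lt_jn] //].
  by split; [apply: (P_all ord0) | apply/forallP => j; apply: (P_all (lift ord0 j))].
exact: (P_S (Ordinal (lt_jn : (j < n)%N))).
Qed.

Lemma stays_above_cons q r a b x s :
  stays_above q r a b (x :: s) =
  (q * a - r <= b) && stays_above q r (a + (x : nat)%:Z) (b + (~~ x : nat)%:Z) s.
Proof.
rewrite /stays_above /= (forall_ordS _ (fun j =>
  q * (path_point a b (x :: s) j).1 - r <= (path_point a b (x :: s) j).2)).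
rewrite /path_point /= !addr0; congr andb; apply: eq_forallb => j /=.
by rewrite !PoszD !addrA.
Qed.

Lemma stays_above_slack q r a b s : stays_above q r a b s = slack_nonneg q (b + r - q * a) s.
Proof.
elim: s a b => [|x s IHs] a b.
  rewrite /stays_above /= andbT (forall_ordS _ (fun j =>
    q * (path_point a b [::] j).1 - r <= (path_point a b [::] j).2)).
  rewrite /path_point /= !addr0 subr_ge0 lerBlDr addrC.
  by case: (_ <= _) => //; apply/forallP.
rewrite stays_above_cons IHs /= subr_ge0 lerBlDr.
by congr (_ && slack_nonneg _ _ _); case: x; rewrite /= ?addr0; ring.
Qed.

Definition npaths (K n M : nat) (h : int) : nat :=
  ntuples n (fun s => (count id s == M) && slack_nonneg K h s).

Lemma npaths0 K M h : npaths K 0 M h = (M == 0%N) && (0 <= h).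
Proof. by rewrite /npaths ntuples0 /= andbT eq_sym. Qed.

Lemma npaths_neg K n M h : h < 0 -> npaths K n M h = 0%N.
Proof.
move=> h_lt0; rewrite /npaths ntuplesE big1 // => -[[|x s] ?] _.
all: by rewrite /= leNgt h_lt0 andbF.
Qed.

Lemma npaths_gt K n M h : (n < M)%N -> npaths K n M h = 0%N.
Proof.
move=> lt_nM; rewrite /npaths ntuplesE big1 // => t _.
have := count_size id t; rewrite size_tuple => le_count_n.
by rewrite (_ : (count id t == M) = false) //; apply/negbTE; lia.
Qed.

Lemma npathsS K n M h : (0 <= h) ->
  npaths K n.+1 M h =
  ((if M is M'.+1 then npaths K n M' (h - K%:Z) else 0) + npaths K n M (h + 1))%N.
Proof.
move=> h_ge0; rewrite /npaths ntuplesS; congr addn.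
  case: M => [|M]; first by rewrite ntuplesE big1.
  by apply: eq_ntuples => s /=; rewrite eqSS h_ge0.
by apply: eq_ntuples => s /=; rewrite h_ge0.
Qed.

Lemma npaths_ballot_sum K n M T c : (M + T = n)%N -> (K * M <= T + c)%N ->
  (npaths K n M c%:Z)%:R = ballot_sum K M c (T + c - K * M).
Proof.
elim: n M T c => [|n IHn] M T c eq_n le_KM_Tc.
  have [-> ->] : M = 0%N /\ T = 0%N by lia.
  by rewrite npaths0 ballot_sum0.
rewrite npathsS // (_ : c%:Z + 1 = c.+1); last by rewrite -addn1 PoszD.
case: M eq_n le_KM_Tc => [|M] eq_n le_KM_Tc.
  by rewrite add0n (IHn 0%N n c.+1) ?ballot_sum0 //; lia.
have le_KM_Tc' : (K * M <= T + (c - K))%N by move: le_KM_Tc; rewrite mulnS; lia.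
case: T eq_n le_KM_Tc le_KM_Tc' => [|T] eq_n le_KM_Tc le_KM_Tc'.
  have le_Kc : (K <= c)%N by move: le_KM_Tc; rewrite mulnS; lia.
  rewrite (@npaths_gt K n M.+1) ?addn0; last by lia.
  rewrite (subzn le_Kc) (IHn M 0%N (c - K)%N) //; last by lia.
  have [N ->] : exists N, c = (N + K * M.+1)%N by exists (c - K * M.+1)%N; lia.
  rewrite !add0n (_ : (N + K * M.+1 - K = N + K * M)%N); last by rewrite mulnS; lia.
  by rewrite !addnK !ballot_sum_diag.
rewrite natrD -(ballot_sumS_slack K M c (T.+1 + c - K * M.+1)) addrC.
rewrite (IHn M.+1 T c.+1) -?addSnnS //; last by lia.
congr (_ + _); case: leqP => [le_Kc | lt_cK]; last first.
  by rewrite npaths_neg // subr_lt0 ltz_nat.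
rewrite (subzn le_Kc) (IHn M T.+1 (c - K)%N) //; last by lia.
by congr ballot_sum; move: le_KM_Tc; rewrite mulnS; lia.
Qed.

Lemma sum_nat_cut (V : nmodType) (g : nat -> V) n1 n2 :
  (forall i, (n2 <= i)%N -> g i = 0) ->
  \sum_(0 <= i < n1) g i = \sum_(0 <= i < n2) (if (i < n1)%N then g i else 0).
Proof.
move=> g_eq0; rewrite -big_mkcond /=.
have [le_n12 | lt_n21] := leqP n1 n2; first exact: (big_nat_widen _ _ _ xpredT).
rewrite (@big_cat_nat _ _ _ n2) ?(ltnW lt_n21) //= [X in _ + X]big1_seq ?addr0.
  by rewrite big_nat_cond [RHS]big_nat_cond; apply: eq_bigl => i; lia.
by move=> i /=; rewrite mem_index_iota => /andP[le_n2i _]; apply: g_eq0.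
Qed.

Lemma ballot_sum_cut K M c N :
  ballot_sum K M c N =
  \sum_(0 <= i < (c %/ K.+1).+1)
    (if (i <= M)%N then (-1) ^+ i * ballot K N (M - i) * (bin_shift K c i)%:R else 0).
Proof.
rewrite /ballot_sum.
rewrite -(big_mkord xpredT (fun i => (-1) ^+ i * ballot K N (M - i) * (bin_shift K c i)%:R)).
by rewrite (@sum_nat_cut _ _ _ (c %/ K.+1).+1) // => i lt_ci; rewrite bin_shift_eq0 ?mulr0.
Qed.

Lemma L_card_npaths (k r a b m n : int) (K M T c : nat) :
  k = K -> m - a = M -> n - b = T -> b + r - k * a = c ->
  L_card k r a b m n = npaths K (M + T) M c.
Proof.
move=> eK eM eT ec; rewrite /L_card /npaths /ntuples eM eT !absz_nat.
by apply: eq_card => t; rewrite !inE stays_above_slack ec eK.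
Qed.

Lemma ballot_sum_termE (k r a b m n : int) (K M T c i : nat) :
  k = K -> m - a = M -> n - b = T -> b + r - k * a = c -> (K * M <= T + c)%N ->
  (if (i <= M)%N then (-1) ^+ i * ballot K (T + c - K * M) (M - i) * (bin_shift K c i)%:R
   else 0) =
  (-1) ^+ i * ((n + r + 1 - k * m)%:~R / (n + r + 1 - k * (a + i%:Z))%:~R) *
  (binz (m + n + r - (k + 1) * (a + i%:Z)) (m - a - i%:Z))%:R *
  (binz (b + r - k * (a + i%:Z)) i%:Z)%:R.
Proof.
move=> -> eM eT ec le_KM_Tc.
have -> : r = c%:Z - b + K%:Z * a by rewrite -ec; ring.
have -> : m = a + M%:Z by rewrite -eM; ring.
have -> : n = b + T%:Z by rewrite -eT; ring.
have [le_iM | lt_Mi] := leqP i M; last first.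
  by rewrite /binz (_ : (0 <= a + M%:Z - a - i%:Z) = false) ?andbF ?mulr0 ?mul0r //; lia.
set N := (T + c - K * M)%N.
have eN : N%:Z = T%:Z + c%:Z - K%:Z * M%:Z by rewrite -subzn // PoszD PoszM.
rewrite ballot_binomial.
rewrite (_ : b + T%:Z + (c%:Z - b + K%:Z * a) + 1 - K%:Z * (a + M%:Z) = N.+1); last first.
  by rewrite -addn1 PoszD eN; ring.
rewrite (_ : b + T%:Z + (c%:Z - b + K%:Z * a) + 1 - K%:Z * (a + i%:Z) =
             (N.+1 + K * (M - i))%N); last first.
  by rewrite PoszD PoszM -(subzn le_iM) -addn1 PoszD eN; ring.
rewrite (_ : a + M%:Z + (b + T%:Z) + (c%:Z - b + K%:Z * a) - (K%:Z + 1) * (a + i%:Z) =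
             (N + K.+1 * (M - i))%N); last first.
  by rewrite PoszD PoszM -(subzn le_iM) eN -addn1 PoszD; ring.
rewrite (_ : a + M%:Z - a - i%:Z = (M - i)%N); last by rewrite -(subzn le_iM); ring.
rewrite (_ : b + (c%:Z - b + K%:Z * a) - K%:Z * (a + i%:Z) = c%:Z - (K * i)%N%:Z); last first.
  by rewrite PoszM; ring.
rewrite /bin_shift; case: leqP => [le_Kic | lt_cKi]; first by rewrite (subzn le_Kic) !mulrA.
by rewrite /binz (_ : (0 <= c%:Z - (K * i)%N%:Z) = false) ?mulr0 //; lia.
Qed.

Theorem theorem2p1 (k r a b m n : int)
  (hk : 1 <= k) (ha0 : 0 <= a) (ham : a <= m) (hn : k * m - r <= n)
  (hb0 : 0 <= b) (hb1 : k * a - r <= b) (hbn : b <= n) :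
  (L_card k r a b m n)%:R =
  \sum_(0 <= i < `|((b + r - k * a) %/ (k + 1))%Z|.+1)
     ((-1) ^+ i *
      (((n + r + 1 - k * m)%:~R / (n + r + 1 - k * (a + i%:Z))%:~R) : rat) *
      (binz (m + n + r - (k + 1) * (a + i%:Z)) (m - a - i%:Z))%:R *
      (binz (b + r - k * (a + i%:Z)) i%:Z)%:R).
Proof.
have eK : k = `|k|%N by rewrite gez0_abs //; lia.
have eM : m - a = `|m - a|%N by rewrite gez0_abs //; lia.
have eT : n - b = `|n - b|%N by rewrite gez0_abs //; lia.
have ec : b + r - k * a = `|(b + r - k * a)%R|%N by rewrite gez0_abs //; lia.
have le_KM_Tc : (`|k| * `|(m - a)%R| <= `|(n - b)%R| + `|(b + r - k * a)%R|)%N.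
  by rewrite -lez_nat PoszM PoszD -eK -eM -eT -ec; lia.
rewrite (L_card_npaths eK eM eT ec) (npaths_ballot_sum erefl le_KM_Tc) ballot_sum_cut.
have -> : ((b + r - k * a) %/ (k + 1))%Z = (`|(b + r - k * a)%R| %/ `|k|.+1)%N.
  by rewrite -divz_nat -ec -addn1 PoszD -eK.
rewrite absz_nat.
by apply: eq_big_nat => i _; apply: ballot_sum_termE.
Qed.
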